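(* Let $\mathsf{X}$ be a real Hilbert space with norm $\|\cdot\|$, let $\mathcal{H}\subset\mathsf{X}$ be a closed linear subspace, and let $\mathcal{M}\subset\mathsf{X}$ be a closed subset that is closed with respect to scalar multiplication ($z\in\mathcal{M}\Rightarrow \alpha z\in\mathcal{M}$ for all real $\alpha$). Assume every point of $\mathsf{X}$ has at least one closest point in $\mathcal{M}$, and let $\Pi_{\mathcal{M}}$ be a map assigning to each point one such closest point; let $\Pi_{\mathcal{H}}$ be the orthogonal projection onto $\mathcal{H}$. For $x\in\mathsf{X}$ define $y_0=x$ and $y_{k+1}=\Pi_{\mathcal{H}}\Pi_{\mathcal{M}}y_k$ for $k\ge 0$. Then: 1. $\|y_k-\Pi_{\mathcal{M}}y_k\|\to0$ and $\|\Pi_{\mathcal{M}}y_k-y_{k+1}\|\to 0$ as $k\to\infty$. 2. If moreover $\mathcal{M}\cap B_1$ is compact, where $B_1=\{z\in\mathsf{X}:\|z\|\le1\}$, then there is a subsequence $(y_{i_k})$ of $(y_k)$ converging to a point $y^*\in\mathcal{M}\cap\mathcal{H}$. *)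

From Stdlib Require Import Reals List.
Open Scope R_scope.

Record HilbertSpace := {
  hcarrier :> Type;
  hzero : hcarrier;
  hadd : hcarrier -> hcarrier -> hcarrier;
  hopp : hcarrier -> hcarrier;
  hscal : R -> hcarrier -> hcarrier;
  hinner : hcarrier -> hcarrier -> R;
  hadd_assoc : forall x y z, hadd x (hadd y z) = hadd (hadd x y) z;
  hadd_comm : forall x y, hadd x y = hadd y x;
  hadd_zero : forall x, hadd x hzero = x;
  hadd_opp : forall x, hadd x (hopp x) = hzero;
  hscal_one : forall x, hscal 1 x = x;
  hscal_assoc : forall a b x, hscal a (hscal b x) = hscal (a * b) x;
  hscal_distr_l : forall a x y, hscal a (hadd x y) = hadd (hscal a x) (hscal a y);
  hscal_distr_r : forall a b x, hscal (a + b) x = hadd (hscal a x) (hscal b x);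
  hinner_sym : forall x y, hinner x y = hinner y x;
  hinner_add : forall x y z, hinner (hadd x y) z = hinner x z + hinner y z;
  hinner_scal : forall a x y, hinner (hscal a x) y = a * hinner x y;
  hinner_pos : forall x, 0 <= hinner x x;
  hinner_def : forall x, hinner x x = 0 -> x = hzero;
  hcomplete : forall u : nat -> hcarrier,
    (forall eps, eps > 0 -> exists N, forall n m, (n >= N)%nat -> (m >= N)%nat ->
       sqrt (hinner (hadd (u n) (hopp (u m))) (hadd (u n) (hopp (u m)))) < eps) ->
    exists l, forall eps, eps > 0 -> exists N, forall n, (n >= N)%nat ->
       sqrt (hinner (hadd (u n) (hopp l)) (hadd (u n) (hopp l))) < eps
}.

Arguments hzero {h}.
Arguments hadd {h} _ _.
Arguments hopp {h} _.
Arguments hscal {h} _ _.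
Arguments hinner {h} _ _.

Section HDefs.
Context {X : HilbertSpace}.

Definition hsub (x y : X) : X := hadd x (hopp y).
Definition hnorm (x : X) : R := sqrt (hinner x x).

Definition hconverges (u : nat -> X) (l : X) : Prop :=
  forall eps, eps > 0 -> exists N, forall n, (n >= N)%nat -> hnorm (hsub (u n) l) < eps.

Definition hopen (U : X -> Prop) : Prop :=
  forall x, U x -> exists eps, eps > 0 /\ forall z, hnorm (hsub z x) < eps -> U z.

Definition hclosed (S : X -> Prop) : Prop := hopen (fun x => ~ S x).

Definition hcompact (K : X -> Prop) : Prop :=
  forall (I : Type) (U : I -> X -> Prop),
    (forall i, hopen (U i)) ->
    (forall x, K x -> exists i, U i x) ->
    exists l : list I, forall x, K x -> exists i, In i l /\ U i x.

Definition closed_subspace (H : X -> Prop) : Prop :=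
  H hzero /\ (forall x y, H x -> H y -> H (hadd x y)) /\
  (forall a x, H x -> H (hscal a x)) /\ hclosed H.

Definition is_orth_proj (H : X -> Prop) (PH : X -> X) : Prop :=
  forall x, H (PH x) /\ forall h, H h -> hinner (hsub x (PH x)) h = 0.

Definition is_nearest_selection (M : X -> Prop) (PM : X -> X) : Prop :=
  forall x, M (PM x) /\ forall z, M z -> hnorm (hsub x (PM x)) <= hnorm (hsub x z).

Definition alt_proj_seq (PH PM : X -> X) (x : X) (k : nat) : X :=
  Nat.iter k (fun v => PH (PM v)) x.

End HDefs.

(* Because M is a cone, its nearest point z = PM y satisfies <y - z, z> = 0
   (otherwise some multiple of z would be closer to y), so Pythagoras applies to
   both projections and gives
     |y_k|^2 = |y_k - PM y_k|^2 + |PM y_k - y_(k+1)|^2 + |y_(k+1)|^2.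
   Hence |y_k|^2 decreases and both gaps are square-summable, so they tend to 0.
   The points PM y_k lie in M and have norm at most |x|; rescaled into M ∩ B_1
   they have a convergent subsequence, whose (unscaled) limit y* lies in M.
   By the first part y_(i_k) and y_(i_k + 1) also converge to y*, and the latter
   lie in the closed subspace H, so y* is in H. *)

From Stdlib Require Import Reals Lra Psatz List Classical ClassicalEpsilon.
Open Scope R_scope.

Lemma Un_cv_sqrt_decrement (a d : nat -> R) :
  (forall n, 0 <= d n) -> (forall n, d n <= a n - a (S n)) -> (forall n, 0 <= a n) ->
  Un_cv (fun n => sqrt (d n)) 0.
Proof.
  intros Hd Hda Ha.
  assert (Dec : Un_decreasing a) by (intro n; specialize (Hda n); specialize (Hd n); lra).
  assert (Lb : has_lb a).
  { exists 0. intros r [i ->]. unfold opp_seq. specialize (Ha i). lra. }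
  destruct (decreasing_cv a Dec Lb) as [L HL].
  intros eps Heps. destruct (HL (eps * eps)) as [N HN]; [nra|].
  exists N. intros n Hn. specialize (HN n Hn). unfold Rdist in *.
  rewrite Rminus_0_r, Rabs_right by (apply Rle_ge, sqrt_pos).
  rewrite <- (sqrt_square eps) by lra.
  apply sqrt_lt_1; [auto|nra|].
  pose proof (decreasing_ineq a L Dec HL n).
  pose proof (decreasing_ineq a L Dec HL (S n)).
  specialize (Hda n).
  rewrite Rabs_right in HN by lra.
  lra.
Qed.

Lemma incr_seq_ge (phi : nat -> nat) :
  (forall k, (phi k < phi (S k))%nat) -> forall k, (k <= phi k)%nat.
Proof. intros Hinc k. induction k; [lia|]. specialize (Hinc k). lia. Qed.

Lemma Un_cv_subseq (a : nat -> R) (phi : nat -> nat) l :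
  (forall k, (phi k < phi (S k))%nat) -> Un_cv a l -> Un_cv (fun k => a (phi k)) l.
Proof.
  intros Hinc Ha eps Heps. destruct (Ha eps Heps) as [N HN].
  exists N. intros n Hn. apply HN. pose proof (incr_seq_ge phi Hinc n). lia.
Qed.

Lemma quadratic_min_at_one (B C : R) :
  0 <= C -> (forall t, C * t * t - 2 * B * t >= C - 2 * B) -> B = C.
Proof.
  intros HC Hmin.
  set (s := (B - C) / (C + 1)).
  specialize (Hmin (1 + s)).
  assert (E : (C + 1) * (C + 1) * (C * (1 + s) * (1 + s) - 2 * B * (1 + s) - (C - 2 * B))
              = - ((B - C) * (B - C)) * (C + 2)) by (unfold s; field; lra).
  assert (0 <= (C + 1) * (C + 1) * (C * (1 + s) * (1 + s) - 2 * B * (1 + s) - (C - 2 * B)))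
    by (apply Rmult_le_pos; nra).
  assert ((B - C) * (B - C) * (C + 2) <= 0) by lra.
  assert ((B - C) * (B - C) <= 0) by (apply Rmult_le_reg_r with (C + 2); lra).
  nra.
Qed.

Definition is_cone {X : HilbertSpace} (M : X -> Prop) : Prop :=
  forall (a : R) (z : X), M z -> M (hscal a z).

Section HilbertGeometry.
Context {X : HilbertSpace}.
Implicit Types (u v w : X) (a c : R).

Lemma hinner_0l v : hinner hzero v = 0.
Proof. pose proof (hinner_add X hzero hzero v). rewrite hadd_zero in H. lra. Qed.

Lemma hinner_0r v : hinner v hzero = 0.
Proof. rewrite hinner_sym; apply hinner_0l. Qed.

Lemma hinner_addr u v w : hinner w (hadd u v) = hinner w u + hinner w v.
Proof. rewrite !(hinner_sym X w). apply hinner_add. Qed.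

Lemma hinner_oppl u v : hinner (hopp u) v = - hinner u v.
Proof. pose proof (hinner_add X u (hopp u) v). rewrite hadd_opp, hinner_0l in H. lra. Qed.

Lemma hinner_oppr u v : hinner v (hopp u) = - hinner v u.
Proof. rewrite hinner_sym, hinner_oppl, hinner_sym. reflexivity. Qed.

Lemma hinner_scalr a u v : hinner v (hscal a u) = a * hinner v u.
Proof. rewrite hinner_sym, hinner_scal, hinner_sym. reflexivity. Qed.

Ltac hinner_expand :=
  unfold hsub;
  repeat first [ rewrite hinner_add | rewrite hinner_addr | rewrite hinner_oppl
               | rewrite hinner_oppr | rewrite hinner_scal | rewrite hinner_scalr ].

Lemma hnorm_ge0 v : 0 <= hnorm v.
Proof. apply sqrt_pos. Qed.

Lemma hnorm_sqr v : hnorm v * hnorm v = hinner v v.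
Proof. apply sqrt_sqrt, hinner_pos. Qed.

Lemma hinner_le_hnorm u v : hinner u v <= hnorm u * hnorm v.
Proof.
  assert (Hsq : hinner u v * hinner u v <= hinner u u * hinner v v).
  { destruct (hinner_pos X v) as [Hv|Hv].
    - pose proof (hinner_pos X (hadd u (hscal (- hinner u v / hinner v v) v))) as P.
      revert P. hinner_expand. rewrite (hinner_sym X v u).
      set (A := hinner u u) in *. set (B := hinner u v) in *. set (C := hinner v v) in *. intro P.
      assert (E : A + - B / C * B + (- B / C * B + - B / C * (- B / C * C)) = A - B * B / C)
        by (field; lra).
      rewrite E in P. apply Rmult_le_compat_r with (r := C) in P; [|lra].
      replace ((A - B * B / C) * C) with (A * C - B * B) in P by (field; lra). lra.
    - symmetry in Hv. apply hinner_def in Hv. subst v. rewrite !hinner_0r. lra. }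
  rewrite <- (hnorm_sqr u), <- (hnorm_sqr v) in Hsq.
  assert (Hn : 0 <= hnorm u * hnorm v) by (apply Rmult_le_pos; apply hnorm_ge0).
  nra.
Qed.

Lemma hnorm_sub_le u v w : hnorm (hsub u w) <= hnorm (hsub u v) + hnorm (hsub v w).
Proof.
  assert (E : hinner (hsub u w) (hsub u w) = hinner (hsub u v) (hsub u v)
     + 2 * hinner (hsub u v) (hsub v w) + hinner (hsub v w) (hsub v w)).
  { hinner_expand. rewrite (hinner_sym X v u), (hinner_sym X w u), (hinner_sym X w v). lra. }
  pose proof (hinner_le_hnorm (hsub u v) (hsub v w)).
  rewrite <- !hnorm_sqr in E.
  pose proof (hnorm_ge0 (hsub u w)). pose proof (hnorm_ge0 (hsub u v)).
  pose proof (hnorm_ge0 (hsub v w)).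
  nra.
Qed.

Lemma hnorm_subC u v : hnorm (hsub u v) = hnorm (hsub v u).
Proof. unfold hnorm. f_equal. hinner_expand. rewrite (hinner_sym X v u). lra. Qed.

Lemma hnorm_subxx v : hnorm (hsub v v) = 0.
Proof.
  unfold hnorm. replace (hinner (hsub v v) (hsub v v)) with 0; [apply sqrt_0|].
  hinner_expand. lra.
Qed.

Lemma sqrt_sqr_mul a r : 0 <= r -> sqrt (a * a * r) = Rabs a * sqrt r.
Proof.
  intro Hr. rewrite sqrt_mult_alt by nra.
  change (a * a) with (Rsqr a). rewrite sqrt_Rsqr_abs. reflexivity.
Qed.

Lemma hnorm_scal a v : hnorm (hscal a v) = Rabs a * hnorm v.
Proof.
  unfold hnorm. rewrite hinner_scal, hinner_scalr, <- Rmult_assoc.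
  apply sqrt_sqr_mul, hinner_pos.
Qed.

Lemma hnorm_sub_scal a u v : hnorm (hsub (hscal a u) (hscal a v)) = Rabs a * hnorm (hsub u v).
Proof.
  unfold hnorm. rewrite <- sqrt_sqr_mul by apply hinner_pos. f_equal.
  hinner_expand. ring.
Qed.

Lemma pythagoras_sub u v :
  hinner (hsub u v) v = 0 -> hinner u u = hinner (hsub u v) (hsub u v) + hinner v v.
Proof. hinner_expand. rewrite (hinner_sym X v u). lra. Qed.

Lemma cone_nearest_orth (M : X -> Prop) (PM : X -> X) v :
  is_cone M -> is_nearest_selection M PM -> hinner (hsub v (PM v)) (PM v) = 0.
Proof.
  intros Hcone HPM. destruct (HPM v) as [Mz Hmin].
  assert (Hquad : forall t, hinner (PM v) (PM v) * t * t - 2 * hinner v (PM v) * t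
                            >= hinner (PM v) (PM v) - 2 * hinner v (PM v)).
  { intro t. specialize (Hmin _ (Hcone t (PM v) Mz)).
    apply sqrt_le_0 in Hmin; try apply hinner_pos.
    revert Hmin. hinner_expand. rewrite (hinner_sym X (PM v) v). lra. }
  apply quadratic_min_at_one in Hquad; [|apply hinner_pos].
  hinner_expand. lra.
Qed.

Lemma hclosed_limit (S : X -> Prop) (s : nat -> X) l :
  hclosed S -> (forall n, S (s n)) -> hconverges s l -> S l.
Proof.
  intros Hcl Hs Hl. apply NNPP. intro Hnot. destruct (Hcl l Hnot) as [e [He Hball]].
  destruct (Hl e He) as [N HN]. apply (Hball (s N)); auto.
Qed.

Lemma hconverges_close (s t : nat -> X) l :
  hconverges s l -> Un_cv (fun n => hnorm (hsub (t n) (s n))) 0 -> hconverges t l.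
Proof.
  intros Hs Hts e He. destruct (Hts (e / 2)) as [N1 HN1]; [lra|].
  destruct (Hs (e / 2)) as [N2 HN2]; [lra|].
  exists (Nat.max N1 N2). intros n Hn.
  specialize (HN1 n ltac:(lia)). specialize (HN2 n ltac:(lia)).
  unfold Rdist in HN1. rewrite Rminus_0_r, Rabs_right in HN1 by apply Rle_ge, hnorm_ge0.
  pose proof (hnorm_sub_le (t n) (s n) l). lra.
Qed.

Lemma hconverges_scal c (s : nat -> X) l :
  0 < c -> hconverges s l -> hconverges (fun n => hscal c (s n)) (hscal c l).
Proof.
  intros Hc Hs e He. destruct (Hs (e / c)) as [N HN]; [apply Rlt_gt, Rdiv_lt_0_compat; lra|].
  exists N. intros n Hn. specialize (HN n Hn).
  rewrite hnorm_sub_scal, Rabs_pos_eq by lra.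
  apply Rmult_lt_compat_l with (r := c) in HN; [|lra].
  replace (c * (e / c)) with e in HN by (field; lra). exact HN.
Qed.

Lemma fold_right_max_ge (f : X -> nat) (l : list X) (i : X) m :
  In i l -> (f i <= fold_right (fun q k => Nat.max (f q) k) m l)%nat.
Proof.
  induction l as [|a l IHl]; simpl; intros Hi; [contradiction|].
  destruct Hi as [<-|Hi]; [lia|]. specialize (IHl Hi). lia.
Qed.

Lemma compact_cluster (K : X -> Prop) (s : nat -> X) :
  hcompact K -> (forall n, K (s n)) ->
  exists p, K p /\ forall e, e > 0 -> forall N, exists n, (n >= N)%nat /\ hnorm (hsub (s n) p) < e.
Proof.
  intros HK Hs. apply NNPP. intro Hno.
  (* Otherwise every point of K has a ball that the sequence eventually avoids. *)
  assert (Havoid : forall p, exists eN : R * nat, fst eN > 0 /\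
     (K p -> forall n, (n >= snd eN)%nat -> hnorm (hsub (s n) p) >= fst eN)).
  { intro p. destruct (classic (K p)) as [Kp|Kp].
    - apply NNPP; intro C. apply Hno. exists p. split; auto.
      intros e He N. apply NNPP; intro C2. apply C. exists (e, N). simpl. split; auto.
      intros _ n Hn. apply Rnot_lt_ge. intro Hlt. apply C2. exists n; auto.
    - exists (1, 0%nat). simpl. split; [lra|]. tauto. }
  set (g := fun p => proj1_sig (constructive_indefinite_description _ (Havoid p))).
  assert (Hg : forall p, fst (g p) > 0 /\
     (K p -> forall n, (n >= snd (g p))%nat -> hnorm (hsub (s n) p) >= fst (g p)))
    by (intro p; exact (proj2_sig (constructive_indefinite_description _ (Havoid p)))).
  destruct (HK X (fun p z => K p /\ hnorm (hsub z p) < fst (g p))) as [l Hl].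
  - intros p z [Kp Hz]. exists (fst (g p) - hnorm (hsub z p)). split; [lra|].
    intros w Hw. split; auto. pose proof (hnorm_sub_le w z p). lra.
  - intros p Kp. exists p. split; auto. rewrite hnorm_subxx. apply (proj1 (Hg p)).
  - set (N := fold_right (fun q k => Nat.max (snd (g q)) k) 0%nat l).
    destruct (Hl (s N) (Hs N)) as [i [Hi [Ki Hd]]].
    pose proof (fold_right_max_ge (fun q => snd (g q)) l i 0%nat Hi) as HN.
    pose proof (proj2 (Hg i) Ki N HN). lra.
Qed.

Lemma cluster_subseq (s : nat -> X) p :
  (forall e, e > 0 -> forall N, exists n, (n >= N)%nat /\ hnorm (hsub (s n) p) < e) ->
  exists phi : nat -> nat, (forall k, (phi k < phi (S k))%nat) /\
    hconverges (fun k => s (phi k)) p.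
Proof.
  intros Hp.
  assert (Hnext : forall k m, exists n, (n > m)%nat /\ hnorm (hsub (s n) p) < / INR (S k)).
  { intros k m. destruct (Hp (/ INR (S k))) with (N := S m) as [n [Hn1 Hn2]].
    - apply Rlt_gt, Rinv_0_lt_compat, lt_0_INR. lia.
    - exists n. split; auto. }
  set (g := fun k m => proj1_sig (constructive_indefinite_description _ (Hnext k m))).
  assert (Hg : forall k m, (g k m > m)%nat /\ hnorm (hsub (s (g k m)) p) < / INR (S k))
    by (intros k m; exact (proj2_sig (constructive_indefinite_description _ (Hnext k m)))).
  set (phi := fix f k := match k with O => g O O | S k' => g (S k') (f k') end).
  assert (Hphi : forall k, hnorm (hsub (s (phi k)) p) < / INR (S k))
    by (intros [|k]; simpl; apply Hg).
  exists phi. split.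
  - intro k. simpl. apply (proj1 (Hg _ _)).
  - intros e He. destruct (archimed_cor1 e He) as [N [HN HN0]].
    exists N. intros n Hn. eapply Rlt_le_trans; [apply Hphi|].
    apply Rlt_le. eapply Rle_lt_trans; [|apply HN].
    apply Rinv_le_contravar; [apply lt_0_INR; lia | apply le_INR; lia].
Qed.

Lemma compact_subseq (K : X -> Prop) (s : nat -> X) :
  hcompact K -> (forall n, K (s n)) ->
  exists (phi : nat -> nat) p, (forall k, (phi k < phi (S k))%nat) /\ K p /\
    hconverges (fun k => s (phi k)) p.
Proof.
  intros HK Hs. destruct (compact_cluster K s HK Hs) as [p [Kp Hp]].
  destruct (cluster_subseq s p Hp) as [phi [Hinc Hcv]].
  exists phi, p. auto.
Qed.

Lemma cone_bounded_subseq (M : X -> Prop) (s : nat -> X) r :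
  is_cone M -> hcompact (fun z => M z /\ hnorm z <= 1) ->
  (forall n, M (s n)) -> (forall n, hnorm (s n) <= r) ->
  exists (phi : nat -> nat) p, (forall k, (phi k < phi (S k))%nat) /\ M p /\
    hconverges (fun k => s (phi k)) p.
Proof.
  intros Hcone HK Hs Hr.
  set (c := r + 1).
  assert (Hc : 0 < c) by (pose proof (hnorm_ge0 (s 0%nat)); specialize (Hr 0%nat); unfold c; lra).
  set (w := fun n => hscal (/ c) (s n)).
  assert (Hw : forall n, M (w n) /\ hnorm (w n) <= 1).
  { intro n. split; [apply Hcone, Hs|].
    unfold w. rewrite hnorm_scal, Rabs_pos_eq by (apply Rlt_le, Rinv_0_lt_compat; lra).
    apply Rmult_le_reg_l with c; [lra|].
    rewrite <- Rmult_assoc, Rinv_r, Rmult_1_l, Rmult_1_r by lra.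
    specialize (Hr n). unfold c. lra. }
  destruct (compact_subseq _ w HK Hw) as [phi [p [Hinc [[Mp _] Hcv]]]].
  exists phi, (hscal c p). split; [auto|]. split; [apply Hcone, Mp|].
  apply hconverges_scal with (c := c) in Hcv; [|lra].
  intros e He. destruct (Hcv e He) as [N HN]. exists N. intros n Hn.
  specialize (HN n Hn). unfold w in HN.
  rewrite hscal_assoc, Rinv_r, hscal_one in HN by lra. exact HN.
Qed.

End HilbertGeometry.

Section AlternatingProjections.
Variables (X : HilbertSpace) (H M : X -> Prop) (PH PM : X -> X) (x : X).
Hypotheses (hMcone : is_cone M) (hPM : is_nearest_selection M PM)
  (hPH : is_orth_proj H PH).

Local Notation y := (alt_proj_seq PH PM x).

Lemma alt_proj_energy k :
  hinner (y k) (y k) = hinner (hsub (y k) (PM (y k))) (hsub (y k) (PM (y k)))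
    + hinner (hsub (PM (y k)) (y (S k))) (hsub (PM (y k)) (y (S k)))
    + hinner (y (S k)) (y (S k)).
Proof.
  change (y (S k)) with (PH (PM (y k))).
  rewrite (pythagoras_sub (y k) (PM (y k))) by exact (cone_nearest_orth M PM (y k) hMcone hPM).
  destruct (hPH (PM (y k))) as [HPz Horth].
  rewrite (pythagoras_sub (PM (y k)) (PH (PM (y k)))) by exact (Horth _ HPz).
  ring.
Qed.

Lemma alt_proj_gap_cv0 : Un_cv (fun k => hnorm (hsub (y k) (PM (y k)))) 0.
Proof.
  apply (Un_cv_sqrt_decrement (fun k => hinner (y k) (y k))); intros; try apply hinner_pos.
  rewrite (alt_proj_energy n). pose proof (hinner_pos X (hsub (PM (y n)) (y (S n)))). lra.
Qed.

Lemma alt_proj_step_cv0 : Un_cv (fun k => hnorm (hsub (PM (y k)) (y (S k)))) 0.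
Proof.
  apply (Un_cv_sqrt_decrement (fun k => hinner (y k) (y k))); intros; try apply hinner_pos.
  rewrite (alt_proj_energy n). pose proof (hinner_pos X (hsub (y n) (PM (y n)))). lra.
Qed.

Lemma alt_proj_nearest_hnorm_le k : hnorm (PM (y k)) <= hnorm x.
Proof.
  assert (Hdec : hinner (y k) (y k) <= hinner x x).
  { induction k as [|k IHk]; [simpl; lra|]. rewrite (alt_proj_energy k) in IHk.
    pose proof (hinner_pos X (hsub (PM (y k)) (y (S k)))).
    pose proof (hinner_pos X (hsub (y k) (PM (y k)))). lra. }
  apply sqrt_le_1_alt.
  rewrite (pythagoras_sub (y k) (PM (y k))) in Hdec
    by exact (cone_nearest_orth M PM (y k) hMcone hPM).
  pose proof (hinner_pos X (hsub (y k) (PM (y k)))). lra.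
Qed.

Lemma alt_proj_subseq_cv :
  hclosed H -> hcompact (fun z => M z /\ hnorm z <= 1) ->
  exists (phi : nat -> nat) (ystar : X), (forall k, (phi k < phi (S k))%nat) /\
    M ystar /\ H ystar /\ hconverges (fun k => y (phi k)) ystar.
Proof.
  intros HHcl HK.
  destruct (cone_bounded_subseq M (fun k => PM (y k)) (hnorm x) hMcone HK
              (fun k => proj1 (hPM (y k))) alt_proj_nearest_hnorm_le)
    as [phi [ystar [Hinc [Mystar Hcv]]]].
  exists phi, ystar. repeat split; auto.
  - apply (hclosed_limit H (fun k => y (S (phi k)))); auto.
    + intro k. apply hPH.
    + apply (hconverges_close _ _ _ Hcv).
      apply (Un_cv_ext (fun k => hnorm (hsub (PM (y (phi k))) (y (S (phi k)))))).
      * intro k. apply hnorm_subC.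
      * exact (Un_cv_subseq _ phi 0 Hinc alt_proj_step_cv0).
  - exact (hconverges_close _ _ _ Hcv (Un_cv_subseq _ phi 0 Hinc alt_proj_gap_cv0)).
Qed.

End AlternatingProjections.

Theorem theorem1 (X : HilbertSpace) (H M : X -> Prop) (PH PM : X -> X) (x : X)
  (hH : closed_subspace H)
  (hMcl : hclosed M)
  (hMscal : forall (a : R) (z : X), M z -> M (hscal a z))
  (hPM : is_nearest_selection M PM)
  (hPH : is_orth_proj H PH) :
  let y := alt_proj_seq PH PM x in
  (Un_cv (fun k => hnorm (hsub (y k) (PM (y k)))) 0 /\
   Un_cv (fun k => hnorm (hsub (PM (y k)) (y (S k)))) 0) /\
  (hcompact (fun z => M z /\ hnorm z <= 1) ->
   exists (phi : nat -> nat) (ystar : X),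
     (forall k, (phi k < phi (S k))%nat) /\
     M ystar /\ H ystar /\ hconverges (fun k => y (phi k)) ystar).
Proof.
  intros y. split.
  - split; [eapply alt_proj_gap_cv0 | eapply alt_proj_step_cv0]; eassumption.
  - destruct hH as [_ [_ [_ HHcl]]].
    eapply alt_proj_subseq_cv; eassumption.
Qed.
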